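(* $$\sum_{n\ge0}S_n(1,q)\frac{z^n}{n!}=\frac{1}{(1-\sin z)^q},$$ and for $n\ge1$, $$S_n(x,-1)=\begin{cases}(1-x)(1-2x)^{m-1},& n=2m,\\ -(1-2x)^m,& n=2m+1.\end{cases}$$
   Context: Permutations of $[n]=\{1,\dots,n\}$ are written in standard cycle decomposition (each cycle starts with its smallest element, cycles in increasing order of smallest elements). $\pi$ has an excedance at $i$ if $\pi(i)>i$; ${\rm exc}(\pi)$ is the number of excedances, ${\rm cyc}(\pi)$ the number of cycles. A value $x$ is a double excedance of $\pi$ if $\pi^{-1}(x)<x<\pi(x)$. A permutation $\pi$ of $[n]$ is a simsun permutation of the second kind if for every $k\in\{0,1,\dots,n\}$, deleting the $k$ largest letters from the cycle decomposition of $\pi$ yields a permutation with no double excedances; $\mathcal{SS}_n$ is the set of these, $S_n(x,q)=\sum_{\pi\in\mathcal{SS}_n}x^{{\rm exc}(\pi)}q^{{\rm cyc}(\pi)}$, and $S_0(x,q)=1$. *)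

From HB Require Import structures.
From mathcomp Require Import all_boot all_order all_algebra all_fingroup.
From mathcomp Require Import all_classical all_reals all_analysis.
Set Implicit Arguments. Unset Strict Implicit. Unset Printing Implicit Defensive.
Import Order.TTheory GRing.Theory Num.Theory.

(* A permutation of [n] = {1..n} is represented by s : 'S_n, a permutation of
   'I_n = {0..n-1}; element i : 'I_n stands for i+1.  This shift preserves the
   order, hence excedances, double excedances and cycles. *)

Definition exc n (s : 'S_n) : nat := #|[set i : 'I_n | (i < s i)%N]|.

(* Number of cycles (fixed points count as cycles of length 1). *)
Definition cyc n (s : 'S_n) : nat := #|porbits s|.

(* Deleting the letters >= m (i.e. the n - m largest letters of [n]) from the
   cycle decomposition of s: in each cycle, the new successor of a surviving
   letter i < m is the next letter along its cycle that survives, i.e.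
   s^j(i) for the least j >= 1 with s^j(i) < m.  (The cycle of i has length
   <= n, so it is found among j = 1..n.) *)
Definition del_succ n (s : 'S_n) (m : nat) (i : 'I_n) : 'I_n :=
  let k := find (fun k => (iter k.+1 s i < m)%N) (iota 0 n) in iter k.+1 s i.

Definition del_dexc n (s : 'S_n) (m : nat) (x : 'I_n) : bool :=
  [exists y : 'I_n, [&& (y < m)%N, del_succ s m y == x, (y < x)%N &
                        (x < del_succ s m x)%N]].

(* simsun permutations of the second kind: for every k in {0..n}, deleting the
   k largest letters (m = n - k survivors, m ranging over {0..n}) leaves a
   permutation with no double excedance. *)
Definition simsun2 n (s : 'S_n) : bool :=
  [forall m : 'I_n.+1, forall x : 'I_n, (x < m)%N ==> ~~ del_dexc s m x].

Definition SS n : {set 'S_n} := [set s | simsun2 s].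

(* S_n(x,q) evaluated in a commutative ring (S_0 = 1 automatically, since
   'S_0 has a single permutation with 0 excedances and 0 cycles). *)
Definition Sxq (R : comNzRingType) n (x q : R) : R :=
  (\sum_(s in SS n) x ^+ exc s * q ^+ cyc s)%R.

From HB Require Import structures.
From mathcomp Require Import all_boot all_order all_algebra all_fingroup.
From mathcomp Require Import all_classical all_reals all_analysis.
From mathcomp Require Import zify ring lra.
Import Order.TTheory GRing.Theory Num.Theory.
Set Implicit Arguments. Unset Strict Implicit. Unset Printing Implicit Defensive.

(* Every simsun permutation of [n+1] arises uniquely from one of [n] by
   inserting the letter n+1 either as a new fixed point or right after some
   letter j of its cycle; since deleting n+1 gives back the old permutation,
   the result is simsun exactly when the old one is and j does not become a
   double excedance, i.e. when the predecessor of j is at least j.  A new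
   fixed point adds a cycle; insertion after j adds an excedance iff j was
   not one.  In a permutation without double excedances every excedance j
   has a predecessor >= j, so the j with succ j <= j <= pred j number
   n - 2 exc.  Hence
     S_{n+1}(x,q) = (q + n x) S_n(x,q) + x (1 - 2x) dS_n/dx(x,q),
   whose solution at q = -1 is the stated closed form.  For the EGF put
   f = (1 - sin)^(-q), w = cos/(1 - sin) and u = 1/(1 + sin): then
   f' = q w f, w' = u w^2 and u' = w u (1 - 2u), so by induction the same
   recurrence gives f^(n) = f w^n S_n(u,q), and f = w = u = 1 at 0. *)

Lemma iter_perm_period N (f : 'S_N) (i : 'I_N) :
  exists2 k, (0 < k <= N)%N & iter k f i = i.
Proof.
exists #|porbit f i|; last exact: iter_porbit.
rewrite lt0n card_porbit_neq0 /=.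
by apply: leq_trans (max_card _) _; rewrite card_ord.
Qed.

Definition first_return N (f : 'S_N) (m : nat) (i : 'I_N) (K : nat) : Prop :=
  [/\ (0 < K)%N, (iter K f i < m)%N &
      forall l, (0 < l < K)%N -> (m <= iter l f i)%N].

Section FirstReturn.
Variables (N : nat) (f : 'S_N) (m : nat) (i : 'I_N).
Hypothesis im : (i < m)%N.

Lemma del_succ_first_return :
  exists2 K, first_return f m i K & del_succ f m i = iter K f i.
Proof.
have [k0 /andP[k00 k0N] k0i] := iter_perm_period f i.
set P := fun k => (iter k.+1 f i < m)%N.
have hasP : has P (iota 0 N).
  apply/hasP; exists k0.-1; last by rewrite /P prednK // k0i.
  by rewrite mem_iota /= add0n prednK.
set k := find P (iota 0 N).
have kN : (k < N)%N by rewrite has_find size_iota in hasP.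
exists k.+1 => //; split=> //; first by have := nth_find 0 hasP; rewrite nth_iota.
move=> l /andP[l0 lk]; have lk' : (l.-1 < k)%N by rewrite prednK.
have := before_find 0 lk'; rewrite nth_iota ?add0n; last exact: ltn_trans lk' kN.
by rewrite /P prednK // => /negbT; rewrite -leqNgt.
Qed.

Lemma del_succE K : first_return f m i K -> del_succ f m i = iter K f i.
Proof.
move=> [K0 KP Kmin]; have [K' [K'0 K'P K'min] ->] := del_succ_first_return.
case: (ltngtP K' K) => [lt|gt|-> //].
- by have := Kmin K'; rewrite K'0 lt leqNgt K'P => /(_ isT).
- by have := K'min K; rewrite K0 gt leqNgt KP => /(_ isT).
Qed.
End FirstReturn.

Lemma del_succ_all N (f : 'S_N) (x : 'I_N) : del_succ f N x = f x.
Proof. by rewrite (@del_succE _ _ _ _ (ltn_ord x) 1) //; split=> // -[|l]. Qed.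

Lemma val_lift_max n (y : 'I_n) : lift ord_max y = y :> nat.
Proof. by rewrite lift_max. Qed.

Section DeleteMax.
Variables (n : nat) (s : 'S_n.+1) (sg : 'S_n).
Local Notation w := (lift ord_max).
Hypothesis s_extends : forall y : 'I_n,
  s (w y) = w (sg y) \/ (s (w y) = ord_max /\ s ord_max = w (sg y)).

(* Each [sg]-step is one [s]-step, or two passing through [ord_max] >= m. *)
Lemma iter_extends m (i : 'I_n) K : (m <= n)%N ->
  (forall l, (0 < l < K)%N -> (m <= iter l sg i)%N) ->
  forall l, (0 < l <= K)%N ->
  exists L, [/\ (0 < L)%N, iter L s (w i) = w (iter l sg i) &
     forall l', (0 < l' < L)%N -> (m <= iter l' s (w i))%N].
Proof.
move=> mn Kmin; elim=> [|l IH] //; rewrite ltnS => /andP[_ lK].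
have [->|lpos] := posnP l.
  case: (s_extends i) => [h|[h1 h2]].
    by exists 1%N; split=> //= l' /andP[a b]; move: a b; case: l'.
  exists 2%N; split=> //=; first by rewrite h1 h2.
  move=> l' /andP[a b]; have -> : l' = 1%N by case: l' a b => [|[|]].
  by rewrite /= h1.
have [|L [L0 HL HLmin]] := IH; first by rewrite lpos ltnW.
have my : (m <= iter l sg i)%N by apply: Kmin; rewrite lpos lK.
case: (s_extends (iter l sg i)) => [h|[h1 h2]].
  exists L.+1; split=> //; first by rewrite iterS HL h.
  move=> l' /andP[l'0]; rewrite ltnS leq_eqVlt => /orP[/eqP->|l'L].
    by rewrite HL val_lift_max.
  by apply: HLmin; rewrite l'0 l'L.
exists L.+2; split=> //; first by rewrite !iterS HL h1 h2.
move=> l' /andP[l'0]; rewrite ltnS leq_eqVlt ltnS leq_eqVlt.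
case/or3P=> [/eqP->|/eqP->|l'L].
- by rewrite iterS HL h1 /=.
- by rewrite HL val_lift_max.
- by apply: HLmin; rewrite l'0 l'L.
Qed.

Lemma del_succ_lift_max m (i : 'I_n) : (m <= n)%N -> (i < m)%N ->
  del_succ s m (w i) = w (del_succ sg m i).
Proof.
move=> mn im; have [K [K0 KP Kmin] ->] := del_succ_first_return sg im.
have [|L [L0 HL HLmin]] := iter_extends mn Kmin (l := K); first by rewrite K0 leqnn.
rewrite -HL; apply: del_succE; first by rewrite val_lift_max.
by split; rewrite // HL val_lift_max.
Qed.
End DeleteMax.

Lemma simsun2P N (f : 'S_N) :
  reflect (forall m, (m <= N)%N -> forall x : 'I_N, (x < m)%N -> ~~ del_dexc f m x)
          (simsun2 f).
Proof.
apply: (iffP forallP) => [H m mN x xm | H m].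
  by have /forallP/(_ x) := H (Ordinal (n := N.+1) (m := m) mN); rewrite /= xm.
by apply/forallP => x; apply/implyP => xm; apply: H => //; rewrite -ltnS.
Qed.

Definition dexc_free N (f : 'S_N) : Prop :=
  forall x y : 'I_N, f y = x -> (y < x)%N -> (x < f x)%N -> False.

Lemma del_dexc_all N (f : 'S_N) (x : 'I_N) :
  del_dexc f N x = [exists y, [&& f y == x, (y < x)%N & (x < f x)%N]].
Proof.
by apply/existsP/existsP => -[y]; rewrite !del_succ_all => H; exists y;
  move: H; rewrite ?del_succ_all ltn_ord.
Qed.

Lemma simsun2_dexc_free N (f : 'S_N) : simsun2 f -> dexc_free f.
Proof.
move=> /simsun2P H x y fy yx xf; have := H N (leqnn N) x (ltn_ord x).
by rewrite del_dexc_all => /existsP; apply; exists y; rewrite fy eqxx yx xf.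
Qed.

Definition lift_max_perm n (sg : 'S_n) : 'S_n.+1 := lift_perm ord_max ord_max sg.

(* [insert_max (Some j) sg] inserts the new largest letter right after [j] in
   its cycle, [insert_max None sg] adds it as a fixed point. *)
Definition insert_max n (o : option 'I_n) (sg : 'S_n) : 'S_n.+1 :=
  if o is Some j then tperm (lift ord_max j) ord_max * lift_max_perm sg
  else lift_max_perm sg.

Definition insertable n (sg : 'S_n) (o : option 'I_n) : bool :=
  if o is Some j then (j <= (sg^-1)%g j)%N else true.

Section InsertMax.
Variables (n : nat) (o : option 'I_n) (sg : 'S_n).
Local Notation w := (lift ord_max).
Local Notation s := (insert_max o sg).

Lemma insert_max_lift (y : 'I_n) : s (w y) = if o == Some y then ord_max else w (sg y).
Proof.
rewrite /insert_max /lift_max_perm; case: o => [j|]; last by rewrite lift_perm_lift.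
rewrite permM; case: (eqVneq j y) => [->|jy]; first by rewrite eqxx tpermL lift_perm_id.
have -> : (Some j == Some y) = false by apply/eqP => -[]; apply/eqP.
by rewrite tpermD ?lift_perm_lift ?(inj_eq lift_inj) ?neq_lift.
Qed.

Lemma insert_max_max : s ord_max = if o is Some j then w (sg j) else ord_max.
Proof.
rewrite /insert_max /lift_max_perm; case: o => [j|]; last by rewrite lift_perm_id.
by rewrite permM tpermR lift_perm_lift.
Qed.

Lemma insert_max_extends (y : 'I_n) :
  s (w y) = w (sg y) \/ (s (w y) = ord_max /\ s ord_max = w (sg y)).
Proof.
rewrite insert_max_lift; case: eqP => [e|]; last by left.
by right; rewrite insert_max_max e.
Qed.

Lemma del_dexc_insert_max m (x : 'I_n) : (m <= n)%N -> (x < m)%N ->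
  del_dexc s m (w x) = del_dexc sg m x.
Proof.
move=> mn xm; rewrite /del_dexc (del_succ_lift_max insert_max_extends) //.
rewrite !val_lift_max; apply/existsP/existsP => -[y].
  case: (unliftP ord_max y) => [y'|] ->; last by rewrite /= ltnNge mn.
  rewrite val_lift_max => /and4P[ym].
  rewrite (del_succ_lift_max insert_max_extends) // (inj_eq lift_inj) => e yx xs.
  by exists y'; rewrite ym e yx xs.
move=> /and4P[ym e yx xs]; exists (w y).
by rewrite val_lift_max ym (del_succ_lift_max insert_max_extends) // (inj_eq lift_inj) e yx xs.
Qed.

Lemma simsun2_insert_max_simsun2 : simsun2 s -> simsun2 sg.
Proof.
move=> /simsun2P H; apply/simsun2P => m mn x xm.
by rewrite -(del_dexc_insert_max mn xm); apply: H; rewrite ?leqW ?val_lift_max.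
Qed.

Lemma simsun2_insert_max_insertable : simsun2 s -> insertable sg o.
Proof.
move=> /simsun2_dexc_free H; rewrite /insertable; case E: o => [j|] //.
rewrite leqNgt; apply/negP => lt.
have ne : (sg^-1)%g j != j by rewrite neq_ltn lt.
apply: (H (w j) (w ((sg^-1)%g j))).
- rewrite insert_max_lift E; case: eqP => [[e]|_]; first by rewrite -e eqxx in ne.
  by rewrite permKV.
- by rewrite !val_lift_max.
- by rewrite insert_max_lift E eqxx val_lift_max /= ltn_ord.
Qed.

Lemma insert_max_dexc_free : simsun2 sg -> insertable sg o -> dexc_free s.
Proof.
move=> Hsg Hc x y; case: (unliftP ord_max x) => [x'|] -> fy yx xf; last first.
  by move: xf; rewrite /= ltnNge -ltnS ltn_ord.
case: (unliftP ord_max y) fy yx xf => [y'|] -> fy yx xf; last first.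
  by move: yx; rewrite val_lift_max /= ltnNge (ltnW (ltn_ord x')).
rewrite !val_lift_max in yx.
move: fy; rewrite insert_max_lift; case: eqP => _ fy.
  by move: (neq_lift ord_max x'); rewrite -fy eqxx.
move/lift_inj: fy => fy; move: xf; rewrite insert_max_lift; case: eqP => [oe|_] xf.
  by move: Hc; rewrite oe /= -{2}fy permK leqNgt yx.
by apply: (simsun2_dexc_free Hsg fy yx); rewrite !val_lift_max in xf.
Qed.

Lemma simsun2_insert_max : simsun2 s = simsun2 sg && insertable sg o.
Proof.
apply/idP/andP => [H | [Hsg Hc]].
  by split; [exact: simsun2_insert_max_simsun2 | exact: simsun2_insert_max_insertable].
apply/simsun2P => m; rewrite leq_eqVlt => /orP[/eqP-> x _ | ].
  rewrite del_dexc_all; apply/existsP => -[y /and3P[/eqP fy yx xf]].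
  exact: insert_max_dexc_free fy yx xf.
rewrite ltnS => mn x; case: (unliftP ord_max x) => [x'|] -> xm; last first.
  by move: xm; rewrite /= ltnNge mn.
rewrite val_lift_max in xm; rewrite del_dexc_insert_max //.
by move/simsun2P: Hsg; apply.
Qed.
End InsertMax.

Lemma exc_sum N (s : 'S_N) : exc s = (\sum_(i < N) (i < s i)%N)%N.
Proof. by rewrite /exc -sum1_card big_mkcond; apply: eq_bigr => i _; rewrite inE. Qed.

Lemma bump_max n (i : 'I_n) : bump n i = i.
Proof. by rewrite /bump leqNgt ltn_ord. Qed.

Lemma exc_insert_max n (o : option 'I_n) (sg : 'S_n) :
  exc (insert_max o sg) = (exc sg + if o is Some j then (sg j <= j)%N else false)%N.
Proof.
rewrite !exc_sum big_ord_recr /= ltnNge -ltnS ltn_ord addn0.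
have lift_widen (i : 'I_n) : widen_ord (leqnSn n) i = lift ord_max i.
  by apply: ord_inj; rewrite lift_max.
under eq_bigr => i _ do rewrite lift_widen insert_max_lift.
case: o => [j|]; last by rewrite addn0; apply: eq_bigr => i _; rewrite /= bump_max.
rewrite (bigD1 j) //= (bigD1 j (P := predT)) //= eqxx /= ltn_ord.
rewrite [RHS]addnAC; congr (_ + _)%N; first by case: leqP.
apply: eq_bigr => i ij.
have -> : (Some j == Some i) = false by apply/eqP => -[e]; rewrite e eqxx in ij.
by rewrite /= bump_max.
Qed.

Lemma porbit_fix N (s : 'S_N) x : s x = x -> porbit s x = [set x].
Proof.
move=> sx; apply/setP => y; rewrite inE.
apply/porbitP/eqP => [[i ->]|->]; first by rewrite permX_fix.
by exists 0%N; rewrite expg0 perm1.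
Qed.

Lemma porbit_lift_max_perm n (sg : 'S_n) (x : 'I_n) :
  porbit (lift_max_perm sg) (lift ord_max x) = lift ord_max @: porbit sg x.
Proof.
have liftX i : ((lift_max_perm sg) ^+ i)%g (lift ord_max x) = lift ord_max ((sg ^+ i)%g x).
  by rewrite !permX; elim: i => //= i ->; rewrite /lift_max_perm lift_perm_lift.
apply/setP => y; apply/porbitP/imsetP => [[i ->]|[z /porbitP[i ->] ->]].
  by rewrite liftX; exists ((sg ^+ i)%g x) => //; apply: mem_porbit.
by exists i; rewrite liftX.
Qed.

Lemma porbits_lift_max_perm n (sg : 'S_n) :
  porbits (lift_max_perm sg) =
    [set ord_max] |: ((fun A : {set 'I_n} => lift ord_max @: A) @: porbits sg).
Proof.
have fix_max : lift_max_perm sg ord_max = ord_max by rewrite lift_perm_id.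
apply/setP => A; apply/imsetP/setU1P.
  move=> [x _ ->]; case: (unliftP ord_max x) => [x'|] ->; last by left; rewrite porbit_fix.
  by right; rewrite porbit_lift_max_perm; apply/imset_f/imset_f.
move=> [->|/imsetP[B /imsetP[x _ ->] ->]]; first by exists ord_max; rewrite ?porbit_fix.
by exists (lift ord_max x) => //; rewrite porbit_lift_max_perm.
Qed.

Lemma cyc_lift_max_perm n (sg : 'S_n) : cyc (lift_max_perm sg) = (cyc sg).+1.
Proof.
rewrite /cyc porbits_lift_max_perm cardsU1 card_imset; last exact/imset_inj/lift_inj.
suff -> : [set @ord_max n] \notin (fun A : {set 'I_n} => lift ord_max @: A) @: porbits sg by [].
apply/imsetP => -[B _ e]; have : @ord_max n \in [set @ord_max n] by rewrite inE.
by rewrite e => /imsetP[z _] /eqP; rewrite (negbTE (neq_lift _ _)).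
Qed.

Lemma cyc_insert_max n (o : option 'I_n) (sg : 'S_n) :
  cyc (insert_max o sg) = (cyc sg + (o == None))%N.
Proof.
case: o => [j|]; last by rewrite /= cyc_lift_max_perm addn1.
(* the transposition merges the fixed point [ord_max] into the cycle of [j] *)
have := porbits_mul_tperm (lift_max_perm sg) (lift ord_max j) ord_max.
rewrite porbit_fix ?inE; last by rewrite lift_perm_id.
rewrite eq_sym neq_lift /= -/(cyc _) -/(cyc _) cyc_lift_max_perm addn0.
rewrite /insert_max; move: (cyc _) (cyc _) => a b; lia.
Qed.

Lemma insert_max_inj n : injective (fun p : 'S_n * option 'I_n => insert_max p.2 p.1).
Proof.
move=> [sg o] [sg' o'] /= e; have ev y : insert_max o sg y = insert_max o' sg' y by rewrite e.
have o_eq : o = o'.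
  case: o o' {e} ev => [j|] [j'|] // ev.
  - have := ev (lift ord_max j); rewrite !insert_max_lift eqxx.
    by case: eqP => [->//|_] /eqP; rewrite (negbTE (neq_lift _ _)).
  - by have /eqP := ev ord_max; rewrite !insert_max_max eq_sym (negbTE (neq_lift _ _)).
  - by have /eqP := ev ord_max; rewrite !insert_max_max (negbTE (neq_lift _ _)).
subst o'; congr (_, _); apply/permP => y; apply: (@lift_inj _ ord_max).
case: o {e} ev => [j|] ev; last by have := ev (lift ord_max y); rewrite !insert_max_lift.
case: (eqVneq j y) => [<-|ne]; first by have := ev ord_max; rewrite !insert_max_max.
have := ev (lift ord_max y); rewrite !insert_max_lift.
by have -> : (Some j == Some y) = false by apply/eqP => -[e']; rewrite e' eqxx in ne.
Qed.

Lemma insert_max_bij n : bijective (fun p : 'S_n * option 'I_n => insert_max p.2 p.1).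
Proof.
apply: inj_card_bij; first exact: insert_max_inj.
by rewrite card_prod card_option card_ord !card_Sn factS mulnC.
Qed.

Definition double_descents n (sg : 'S_n) : nat :=
  \sum_(j < n) ((sg j <= j) && (j <= (sg^-1)%g j)).

Section DexcFree.
Variables (n : nat) (sg : 'S_n).
Hypothesis sg_dexc_free : dexc_free sg.

Lemma dexc_free_exc_pred (j : 'I_n) : (j < sg j)%N -> (j <= (sg^-1)%g j)%N.
Proof.
move=> js; rewrite leqNgt; apply/negP => lt.
by apply: (sg_dexc_free (y := (sg^-1)%g j)) js; rewrite ?permKV.
Qed.

Lemma double_descents_dexc_free : (double_descents sg + 2 * exc sg)%N = n.
Proof.
have pred_ge : (\sum_(j < n) (j <= (sg^-1)%g j) = \sum_(i < n) (sg i <= i))%N.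
  by rewrite (reindex_inj (@perm_inj _ sg)); apply: eq_bigr => i _; rewrite permK.
have exc_compl : (\sum_(i < n) (sg i <= i) + exc sg)%N = n.
  rewrite exc_sum -big_split /= (eq_bigr (fun _ => 1%N)) ?sum1_card ?card_ord //.
  by move=> i _; case: leqP.
have pred_split : (\sum_(j < n) (j <= (sg^-1)%g j) = double_descents sg + exc sg)%N.
  rewrite exc_sum -big_split /=; apply: eq_bigr => j _.
  case: (ltnP j (sg j)) => h; last by rewrite addn0.
  by rewrite (dexc_free_exc_pred h) add0n.
lia.
Qed.
End DexcFree.

Local Open Scope ring_scope.

Lemma big_option (V : nmodType) (T : finType) (P : pred (option T)) (F : option T -> V) :
  \sum_(o | P o) F o = (if P None then F None else 0) + \sum_(j | P (Some j)) F (Some j).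
Proof.
rewrite (bigID (pred1 None)) /=; congr (_ + _).
  case: ifP => PN; last by rewrite big_pred0 // => -[a|] /=; rewrite ?PN ?andbF.
  by rewrite (big_pred1 None) // => -[a|] /=; rewrite ?PN ?andbF.
rewrite (reindex_omap Some id) /=; first by apply: eq_bigl => j /=; rewrite eqxx !andbT.
by move=> [j|] //=; rewrite andbF.
Qed.

Lemma mulX_derivXn (R : nzRingType) e : 'X * ('X^e)^`() = e%:R * 'X^e :> {poly R}.
Proof.
rewrite derivXn; case: e => [|e]; first by rewrite !mulr0n mulr0 mul0r.
by rewrite /= mulrnAr -exprS mulr_natl.
Qed.

Definition exc_cyc_mono (R : comNzRingType) (q : R) n (s : 'S_n) : {poly R} :=
  'X^(exc s) * (q ^+ cyc s)%:P.

Definition simsun_poly (R : comNzRingType) n (q : R) : {poly R} :=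
  \sum_(s in SS n) exc_cyc_mono q s.

Lemma horner_simsun_poly (R : comNzRingType) n (x q : R) :
  (simsun_poly n q).[x] = Sxq n x q.
Proof.
rewrite horner_sum; apply: eq_bigr => s _.
by rewrite hornerM hornerXn hornerC.
Qed.

Lemma simsun_poly0 (R : comNzRingType) (q : R) : simsun_poly 0 q = 1.
Proof.
have SS0 : SS 0 = [set: 'S_0].
  by apply/setP => s; rewrite !inE; apply/forallP => m; apply/forallP => -[].
rewrite /simsun_poly SS0 (eq_bigr (fun _ => 1)) ?sumr_const ?cardsT ?card_Sn //.
move=> s _; rewrite /exc_cyc_mono exc_sum big_ord0 /cyc.
suff -> : #|porbits s| = 0%N by rewrite mulr1.
by apply/eqP; rewrite -leqn0 (leq_trans (leq_imset_card _ _)) // cardT size_enum_ord.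
Qed.

Section Recurrence.
Variables (R : comNzRingType) (n : nat) (q : R).

Lemma simsun_poly_insert : simsun_poly n.+1 q =
  \sum_(sg in SS n) \sum_(o | insertable sg o) exc_cyc_mono q (insert_max o sg).
Proof.
rewrite /simsun_poly (reindex _ (onW_bij _ (@insert_max_bij n))) /=.
rewrite (eq_bigl (fun p => (p.1 \in SS n) && insertable p.1 p.2)); last first.
  by move=> p; rewrite !inE simsun2_insert_max.
by rewrite pair_big_dep.
Qed.

Lemma sum_insertable (sg : 'S_n) : sg \in SS n ->
  \sum_(o | insertable sg o) exc_cyc_mono q (insert_max o sg) =
  q%:P * exc_cyc_mono q sg +
  ((double_descents sg)%:R * 'X + (exc sg)%:R) * exc_cyc_mono q sg.
Proof.
rewrite inE => /simsun2_dexc_free Hs.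
rewrite big_option /exc_cyc_mono exc_insert_max cyc_insert_max addn0 addn1.
rewrite exprS polyCM mulrCA; congr (_ + _).
under eq_bigr => j _ do rewrite exc_insert_max cyc_insert_max addn0.
rewrite -mulr_suml mulrA; congr (_ * _).
rewrite big_mkcond /double_descents {2}exc_sum !natr_sum mulrDl !mulr_suml.
rewrite -big_split /=; apply: eq_bigr => j _.
case: (ltnP j (sg j)) => h.
  by rewrite (dexc_free_exc_pred Hs h) addn0 /= mulr0n mulr1n !mul0r add0r mul1r.
by case: (j <= _)%N; rewrite /= mulr0n ?mulr1n !mul0r ?addr0 // addn1 exprS mul1r.
Qed.

Lemma simsun_poly_rec : simsun_poly n.+1 q =
  (q%:P + n%:R * 'X) * simsun_poly n q + 'X * (1 - 2%:R * 'X) * (simsun_poly n q)^`().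
Proof.
rewrite simsun_poly_insert /simsun_poly raddf_sum /= !mulr_sumr -big_split /=.
apply: eq_bigr => sg Hs; rewrite sum_insertable //.
have dd : (double_descents sg)%:R = n%:R - 2%:R * (exc sg)%:R :> {poly R}.
  apply/eqP; rewrite eq_sym subr_eq -natrM -natrD.
  by rewrite double_descents_dexc_free //; move: Hs; rewrite inE => /simsun2_dexc_free.
have dX : 'X * (exc_cyc_mono q sg)^`() = (exc sg)%:R * exc_cyc_mono q sg.
  by rewrite /exc_cyc_mono derivM derivC mulr0 addr0 mulrA mulX_derivXn mulrA.
have -> : 'X * (1 - 2%:R * 'X) * (exc_cyc_mono q sg)^`() =
    (1 - 2%:R * 'X) * ((exc sg)%:R * exc_cyc_mono q sg) by rewrite -dX; ring.
by rewrite dd; ring.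
Qed.
End Recurrence.

Lemma horner_simsun_poly_rec (R : comNzRingType) n (q x : R) :
  (simsun_poly n.+1 q).[x] = (q + n%:R * x) * (simsun_poly n q).[x] +
                             x * (1 - 2%:R * x) * (simsun_poly n q)^`().[x].
Proof. by rewrite simsun_poly_rec -!polyC_natr !hornerE. Qed.

Lemma mul_deriv_exp (R : comNzRingType) (u : {poly R}) m :
  u * (u ^+ m)^`() = u^`() * u ^+ m * m%:R.
Proof.
rewrite deriv_exp; case: m => [|m]; first by rewrite !mulr0n !mulr0.
by rewrite -mulr_natr exprS; ring.
Qed.

Section SimsunPolyAtMinus1.
Variable R : comNzRingType.
Local Notation u := (1 - 2%:R * 'X : {poly R}).

Let derivu : u^`() = - 2%:R.
Proof. by rewrite derivB -polyC1 derivC sub0r mulr_natl derivMn derivX. Qed.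

Let polyCN1 : (-1 : R)%:P = -1.
Proof. by rewrite polyCN polyC1. Qed.

Lemma simsun_poly_m1_even k : simsun_poly (2 * k).+1 (-1 : R) = - u ^+ k ->
  simsun_poly (2 * k).+2 (-1 : R) = (1 - 'X) * u ^+ k.
Proof.
move=> h; rewrite simsun_poly_rec h polyCN1 derivN.
have -> : 'X * u * - (u ^+ k)^`() = - ('X * (u * (u ^+ k)^`())) by ring.
by rewrite mul_deriv_exp derivu; ring.
Qed.

Lemma simsun_poly_m1_odd k : simsun_poly (2 * k).+2 (-1 : R) = (1 - 'X) * u ^+ k ->
  simsun_poly (2 * k.+1).+1 (-1 : R) = - u ^+ k.+1.
Proof.
move=> h; rewrite mulnS simsun_poly_rec h polyCN1 derivM derivB derivX -polyC1 derivC.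
have -> : 'X * u * ((0 - 1) * u ^+ k + (1 - 'X) * (u ^+ k)^`()) =
    - 'X * u * u ^+ k + 'X * (1 - 'X) * (u * (u ^+ k)^`()) by ring.
by rewrite mul_deriv_exp derivu exprS; ring.
Qed.

Lemma simsun_poly_m1 m :
  simsun_poly (2 * m).+1 (-1 : R) = - u ^+ m /\
  simsun_poly (2 * m).+2 (-1 : R) = (1 - 'X) * u ^+ m.
Proof.
suff odd_m : simsun_poly (2 * m).+1 (-1 : R) = - u ^+ m.
  by split; last exact: simsun_poly_m1_even.
elim: m => [|m IH]; last exact/simsun_poly_m1_odd/simsun_poly_m1_even.
by rewrite simsun_poly_rec simsun_poly0 polyCN1 -polyC1 derivC; ring.
Qed.
End SimsunPolyAtMinus1.

Section SinEGF.
Variables (R : realType) (q : R).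

Definition sin_egf (z : R) : R := powR (1 - sin z) (- q).
Definition sin_egf_w (z : R) : R := cos z / (1 - sin z).
Definition sin_egf_u (z : R) : R := (1 + sin z)^-1.

Let scaleRE (a b : R) : a *: b = a * b. Proof. by []. Qed.

Section AtPoint.
Variable z : R.
Hypothesis z_small : -1 < z < 1.

Let cos_sin_gt0 : [/\ 0 < cos z, 0 < 1 - sin z & 0 < 1 + sin z].
Proof.
have /andP[z1 z2] := z_small; have := @pi_ge2 R => hpi.
have hc : 0 < cos z by apply: cos_gt0_pihalf; apply/andP; split; lra.
by have := cos2Dsin2 z; split=> //; nra.
Qed.

Let dsinN : is_derive z 1 (fun y : R => 1 - sin y) (- cos z).
Proof. by rewrite -[- cos z]sub0r; apply: is_deriveB. Qed.

Let dsinD : is_derive z 1 (fun y : R => 1 + sin y) (cos z).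
Proof. by rewrite -[cos z]add0r; apply: is_deriveD. Qed.

Lemma is_derive_sin_egf : is_derive z 1 sin_egf (q * sin_egf_w z * sin_egf z).
Proof.
have [_ hs1 _] := cos_sin_gt0.
have h := is_derive1_comp (g := fun y : R => 1 - sin y) (is_derive1_powR (- q) hs1) dsinN.
apply: is_derive_eq h _.
rewrite powRB ?(gt_eqF hs1) ?implybT // powRr1 ?ltW // /sin_egf_w /sin_egf.
by field; rewrite gt_eqF.
Qed.

Lemma is_derive_sin_egf_w : is_derive z 1 sin_egf_w (sin_egf_w z ^+ 2 * sin_egf_u z).
Proof.
have [_ hs1 hs2] := cos_sin_gt0.
have := is_deriveM (is_derive_cos z)
  (is_deriveV (f := fun y : R => 1 - sin y) (lt0r_neq0 hs1) dsinN).
move=> h; have {}h : is_derive z 1 sin_egf_w _ := h; apply: is_derive_eq h _.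
rewrite /sin_egf_w /sin_egf_u !scaleRE expr_div_n.
have -> : cos z * (- (1 - sin z) ^- 2 * - cos z) = cos z ^+ 2 / (1 - sin z) ^+ 2 by ring.
have -> : cos z ^+ 2 = 1 - sin z ^+ 2 by rewrite -(cos2Dsin2 z) addrK.
by field; rewrite !lt0r_neq0.
Qed.

Lemma is_derive_sin_egf_u :
  is_derive z 1 sin_egf_u (sin_egf_w z * sin_egf_u z * (1 - 2 * sin_egf_u z)).
Proof.
have [_ hs1 hs2] := cos_sin_gt0.
have h := is_deriveV (f := fun y : R => 1 + sin y) (lt0r_neq0 hs2) dsinD.
have {}h : is_derive z 1 sin_egf_u _ := h; apply: is_derive_eq h _.
by rewrite scaleRE /sin_egf_w /sin_egf_u; field; rewrite !lt0r_neq0.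
Qed.

Lemma is_derive_sin_egf_term n (p : {poly R}) :
  is_derive z 1 (fun y => sin_egf y * (sin_egf_w y ^+ n * p.[sin_egf_u y]))
    (sin_egf z * (sin_egf_w z ^+ n.+1 *
      ((q + n%:R * sin_egf_u z) * p.[sin_egf_u z] +
       sin_egf_u z * (1 - 2%:R * sin_egf_u z) * p^`().[sin_egf_u z]))).
Proof.
have dW := is_deriveX n is_derive_sin_egf_w; rewrite exprfctE in dW.
have dP := is_derive1_comp (g := sin_egf_u) (is_derive_poly p _) is_derive_sin_egf_u.
have h := is_deriveM is_derive_sin_egf (is_deriveM dW dP).
have {}h : is_derive z 1 (fun y => sin_egf y * (sin_egf_w y ^+ n * p.[sin_egf_u y])) _ := h.
apply: is_derive_eq h _; rewrite !scaleRE; clear dW dP.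
have -> : ((fun y => sin_egf_w y ^+ n) * (horner p \o sin_egf_u)) z =
  sin_egf_w z ^+ n * p.[sin_egf_u z] by [].
have -> : n%:R * sin_egf_w z ^+ n.-1 * (sin_egf_w z ^+ 2 * sin_egf_u z) =
    n%:R * sin_egf_u z * sin_egf_w z ^+ n.+1.
  case: n => [|k]; first by rewrite !mulr0n !mul0r.
  by rewrite /= !exprS; ring.
by rewrite exprS /comp; ring.
Qed.
End AtPoint.

Lemma derive1n_sin_egf n z : -1 < z < 1 ->
  derive1n n sin_egf z =
    sin_egf z * (sin_egf_w z ^+ n * (simsun_poly n q).[sin_egf_u z]).
Proof.
elim: n z => [|n IH] z hz.
  by rewrite derive1n0 simsun_poly0 hornerC expr0 mul1r mulr1.
rewrite derive1nS derive1E (near_eq_derive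
  (g := fun y => sin_egf y * (sin_egf_w y ^+ n * (simsun_poly n q).[sin_egf_u y]))).
  by have [_ ->] := is_derive_sin_egf_term hz n (simsun_poly n q); rewrite horner_simsun_poly_rec.
have z_itv : z \in `]-1, 1[ by rewrite in_itv.
near=> y; apply: IH.
have : y \in `]-1, 1[ by near: y; exact: near_in_itvoo.
by rewrite in_itv.
Unshelve. all: by end_near.
Qed.

Lemma derive1n_sin_egf0 n : derive1n n sin_egf 0 = Sxq n 1 q.
Proof.
rewrite derive1n_sin_egf ?ltrN10 ?ltr01 // /sin_egf /sin_egf_w /sin_egf_u.
by rewrite sin0 cos0 subr0 addr0 invr1 mulr1 expr1n mul1r powR1 mul1r horner_simsun_poly.
Qed.
End SinEGF.

Theorem mainTheorem12 :
  (* EGF: the n-th Taylor coefficient (times n!) at 0 of (1 - sin z)^(-q)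
     is S_n(1,q), for every real q and every n >= 0. *)
  (forall (R : realType) (q : R) (n : nat),
      derive1n n (fun z : R => powR (1 - sin z) (- q)) 0 = Sxq n 1 q)
  /\
  (* S_n(x,-1), n >= 1, as an identity valid in every commutative ring. *)
  (forall (R : comNzRingType) (x : R),
     (forall m : nat, (1 <= m)%N ->
        Sxq (2 * m)%N x (-1) = (1 - x) * (1 - 2%:R * x) ^+ (m - 1)) /\
     (forall m : nat,
        Sxq (2 * m).+1 x (-1) = - (1 - 2%:R * x) ^+ m)).
Proof.
split; first by move=> R q n; apply: derive1n_sin_egf0.
move=> R x; split.
  case=> [//|m] _; have [_ even] := simsun_poly_m1 R m.
  by rewrite -horner_simsun_poly mulnS even subn1 -!polyC_natr !hornerE.
move=> m; have [odd _] := simsun_poly_m1 R m.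
by rewrite -horner_simsun_poly odd -!polyC_natr !hornerE.
Qed.
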